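(* In the public project problem with equal participation costs, the BC mechanism coincides with the VCG mechanism; equivalently, $S_i^{BCGC}(\theta_{-i})=0$ for all $i$ and all $\theta_{-i}$, where $S_i^{BCGC}(\theta_{-i})=\max_{\theta_i'\in[0,c]}\sum_{k=1}^n t_k^{VCG}(\theta_i',\theta_{-i})$.
   Context: Public project problem (equal participation costs): $n\ge2$ players, decisions $D=\{0,1\}$ (project cancelled/built), $\Theta_i=[0,c]$ with $c>0$, $v_i(d,\theta_i)=d(\theta_i-c/n)$. The efficient decision is $f(\theta)=1$ iff $\sum_i\theta_i\ge c$. Player $i$'s utility is $v_i(f(\theta),\theta_i)+t_i(\theta)$. The VCG (Clarke) mechanism has $t_i^{VCG}(\theta)=\sum_{j\ne i}v_j(f(\theta),\theta_j)-\max_{d\in D}\sum_{j\ne i}v_j(d,\theta_j)$. The BC (Bailey–Cavallo) mechanism is $t_i^{BC}(\theta)=t_i^{VCG}(\theta)-S_i^{BCGC}(\theta_{-i})/n$ with $S_i^{BCGC}(\theta_{-i})=\max_{\theta_i'\in\Theta_i}\sum_{k=1}^n t^{VCG}_k(\theta_i',\theta_{-i})$. *)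

From HB Require Import structures.
From mathcomp Require Import all_boot all_order all_algebra.
Set Implicit Arguments. Unset Strict Implicit. Unset Printing Implicit Defensive.
Import Order.TTheory GRing.Theory Num.Theory.
Local Open Scope ring_scope.

Section PublicProject.
Variables (R : realFieldType) (n : nat) (c : R).

(* decisions D = {0,1} encoded as bool (false = cancelled, true = built) *)
Definition dval (d : bool) : R := if d then 1 else 0.

Definition v (d : bool) (ti : R) : R := dval d * (ti - c / n%:R).

Definition f (theta : 'I_n -> R) : bool := c <= \sum_(j < n) theta j.

Definition others (i : 'I_n) (d : bool) (theta : 'I_n -> R) : R :=
  \sum_(j < n | j != i) v d (theta j).

Definition tVCG (theta : 'I_n -> R) (i : 'I_n) : R :=
  others i (f theta) theta - Num.max (others i false theta) (others i true theta).

Definition upd (theta : 'I_n -> R) (i : 'I_n) (x : R) : 'I_n -> R :=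
  fun j => if j == i then x else theta j.

Definition total_tVCG (theta : 'I_n -> R) (i : 'I_n) (x : R) : R :=
  \sum_(k < n) tVCG (upd theta i x) k.

Definition is_max_on_0c (g : R -> R) (m : R) : Prop :=
  (exists2 x, 0 <= x <= c & g x = m) /\ (forall x, 0 <= x <= c -> g x <= m).

(* S_i^{BCGC}(theta_{-i}) = s  (the maximum exists and equals s) *)
Definition S_BCGC_is (theta : 'I_n -> R) (i : 'I_n) (s : R) : Prop :=
  is_max_on_0c (total_tVCG theta i) s.

Definition tBC_with (theta : 'I_n -> R) (i : 'I_n) (s : R) : R :=
  tVCG theta i - s / n%:R.

End PublicProject.

From HB Require Import structures.
From mathcomp Require Import all_boot all_order all_algebra.
From mathcomp Require Import lra.
Set Implicit Arguments. Unset Strict Implicit. Unset Printing Implicit Defensive.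
Import Order.TTheory GRing.Theory Num.Theory.
Local Open Scope ring_scope.

(* Since cancelling the project is worth 0 to everybody, the
   Clarke transfer of player k is  [f ? o_k : 0] - max(0, o_k),  where o_k is
   the net value of the project to the other players.  Hence every VCG
   transfer is <= 0, and it is 0 when k is not pivotal, i.e. when o_k
   already agrees in sign with the efficient decision.  So the total transfer
   sum_k t_k(x, theta_{-i}) is <= 0 for every report x of player i, and it
   suffices to find x in [0, c] making nobody pivotal: x = c when o_i >= 0
   (the project is built and every o_k >= o_i >= 0) and x = 0 when o_i < 0
   (it is cancelled and every o_k <= o_i < 0).  Therefore the maximum
   S_i^{BCGC} exists and equals 0, and, a maximum being unique, the BC
   transfer tVCG - S/n reduces to the VCG transfer. *)

Section PublicProjectVCG.
Variables (R : realFieldType) (n : nat) (c : R).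

Local Notation others := (@others R n c).
Local Notation tVCG := (@tVCG R n c).
Local Notation f := (@f R n c).

Lemma others_false (th : 'I_n -> R) k : others k false th = 0.
Proof. by rewrite /others big1 // => j _; rewrite /v /dval mul0r. Qed.

Lemma v_true x : @v R n c true x = x - c / n%:R.
Proof. by rewrite /v /dval mul1r. Qed.

Lemma tVCGE (th : 'I_n -> R) k :
  tVCG th k = (if f th then others k true th else 0) - Num.max 0 (others k true th).
Proof. by rewrite /tVCG others_false; case: (f th); rewrite ?others_false. Qed.

Lemma tVCG_le0 (th : 'I_n -> R) k : tVCG th k <= 0.
Proof. by rewrite tVCGE subr_le0; case: (f th); rewrite le_max lexx ?orbT. Qed.

(* Player k is not pivotal: the others alone would take the same decision. *)
Definition nonpivotal (th : 'I_n -> R) (k : 'I_n) : bool :=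
  if f th then 0 <= others k true th else others k true th <= 0.

Lemma tVCG_nonpivotal (th : 'I_n -> R) k : nonpivotal th k -> tVCG th k = 0.
Proof.
rewrite /nonpivotal tVCGE; case: (f th) => h.
  by rewrite (max_r h) subrr.
by rewrite (max_l h) subrr.
Qed.

Definition surplus (th : 'I_n -> R) : R := \sum_(j < n) @v R n c true (th j).

Lemma surplusD (th : 'I_n -> R) k :
  surplus th = (th k - c / n%:R) + others k true th.
Proof. by rewrite /surplus (bigD1 k) //= v_true. Qed.

Lemma others_exchange (th : 'I_n -> R) j k :
  others k true th = others j true th + th j - th k.
Proof.
by move: (surplusD th j) (surplusD th k); lra.
Qed.

Lemma f_surplus (th : 'I_n -> R) : (0 < n)%N -> f th = (0 <= surplus th).
Proof.
move=> n_gt0; rewrite /f /surplus.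
under [in RHS]eq_bigr => j _ do rewrite v_true.
rewrite sumrB sumr_const card_ord -[_ *+ n]mulr_natr mulfVK ?subr_ge0 //.
by rewrite pnatr_eq0 -lt0n.
Qed.

Lemma others_upd_self (th : 'I_n -> R) i x :
  others i true (upd th i x) = others i true th.
Proof. by apply: eq_bigr => j ji; rewrite /upd (negbTE ji). Qed.

End PublicProjectVCG.

Lemma is_max_on_0c_unique (R : realFieldType) (c : R) (g : R -> R) m1 m2 :
  is_max_on_0c c g m1 -> is_max_on_0c c g m2 -> m1 = m2.
Proof.
move=> [[x1 hx1 <-] le1] [[x2 hx2 <-] le2].
by apply/eqP; rewrite eq_le le2 // le1.
Qed.

Lemma exists_report_no_pivot (R : realFieldType) (n : nat) (c : R)
    (theta : 'I_n -> R) (i : 'I_n) :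
  (2 <= n)%N -> 0 < c -> (forall j, 0 <= theta j <= c) ->
  exists2 x, 0 <= x <= c & forall k, nonpivotal c (upd theta i x) k.
Proof.
move=> n_ge2 c_gt0 htheta.
have n_gt0 : (0 < n)%N by apply: leq_trans n_ge2.
have cn_ge0 : 0 <= c / n%:R by rewrite divr_ge0 ?ler0n ?ltW.
have cn_le_c : c / n%:R <= c.
  by rewrite ler_pdivrMr ?ltr0n // ler_peMr ?ltW // ?ler1n ?ltr1n.
set oi := others c i true theta.
have others_upd x k : others c k true (upd theta i x) = oi + x - upd theta i x k.
  by rewrite (others_exchange c _ i) others_upd_self /upd eqxx.
have surplus_upd x : surplus c (upd theta i x) = x - c / n%:R + oi.
  by rewrite (surplusD c _ i) others_upd_self /upd eqxx.
have [oi_ge0 | oi_lt0] := lerP 0 oi.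
- (* Report c: the project is built and nobody's others dislike it. *)
  exists c; first by rewrite lexx ltW.
  have built : f c (upd theta i c) by rewrite f_surplus // surplus_upd addr_ge0 ?subr_ge0.
  move=> k; rewrite /nonpivotal built others_upd -addrA addr_ge0 // subr_ge0 /upd.
  by case: (k == i) => //; case/andP: (htheta k).
- (* Report 0: the project is cancelled and nobody's others want it. *)
  exists 0; first by rewrite lexx ltW.
  have cancelled : f c (upd theta i 0) = false.
    by rewrite f_surplus // surplus_upd sub0r addrC subr_ge0 leNgt (lt_le_trans oi_lt0).
  move=> k; rewrite /nonpivotal cancelled others_upd addr0 subr_le0 /upd.
  case: (k == i); first exact: ltW.
  by apply: le_trans (ltW oi_lt0) _; case/andP: (htheta k).
Qed.

Theorem mainTheorem8 (R : realFieldType) (n : nat) (c : R)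
  (hn : (2 <= n)%N) (hc : 0 < c) (theta : 'I_n -> R)
  (htheta : forall j, 0 <= theta j <= c) (i : 'I_n) :
  @S_BCGC_is R n c theta i 0 /\
  (forall s, @S_BCGC_is R n c theta i s -> @tBC_with R n c theta i s = @tVCG R n c theta i).
Proof.
have total_le0 x : total_tVCG c theta i x <= 0.
  by apply: sumr_le0 => k _; apply: tVCG_le0.
have S0 : S_BCGC_is c theta i 0.
  split=> //; have [x hx nopivot] := exists_report_no_pivot i hn hc htheta.
  by exists x => //; apply: big1 => k _; apply: tVCG_nonpivotal.
split=> // s /(is_max_on_0c_unique S0) <-.
by rewrite /tBC_with mul0r subr0.
Qed.
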